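(* Let $R$ be an orientable flat surface given by a holomorphic Abelian differential on a compact genus $g$ surface, and let $T$ be a geodesic triangulation of $R$ (by saddle connections, vertices at zeros). Orient each edge of $T$ so that its $x$-component is positive (for vertical edges the orientation is not defined). Let $W$ be a subset of the edges of $T$. Then there exists an integral multicurve $\Delta$ on $R$ such that: (a) $\Delta$ is disjoint from the vertices of $T$ and transverse to the edges; (b) $\Delta$ crosses each edge of $W$ at least once; (c) each time $\Delta$ crosses an edge $e\in W$, the crossing is from left to right with respect to the orientation of $e$; if $e$ is vertical, all crossings are from the same side; (d) for each edge $e$ of $T$, the intersection number $i(\Delta,e)\le n$, where $n$ depends only on $g$.
   Context: An integral multicurve is a finite set of oriented closed curves with integer weights (a negative weight corresponds to reversing orientation). The $x$-component of an edge refers to the real part of its holonomy (period of the Abelian differential along it). *)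

From HB Require Import structures.
From mathcomp Require Import all_boot all_order all_algebra.
From mathcomp Require Import all_classical all_reals all_analysis.
Set Implicit Arguments. Unset Strict Implicit. Unset Printing Implicit Defensive.
Import Order.TTheory GRing.Theory Num.Theory.
Local Open Scope ring_scope.

(* Combinatorial encoding of a flat surface R (given by an Abelian          *)
(* differential) together with a geodesic triangulation T of R.             *)
(*   - triangles are indexed by 'I_nF; side (t,k), k : 'I_3, of triangle t   *)
(*     is oriented counterclockwise (triangle on its left) and goes from     *)
(*     vertex k to vertex k+1 of t;                                          *)
(*   - [tglue] pairs the sides (fixed-point-free involution); the gluing is   *)
(*     orientation reversing, so the glued surface is closed and oriented;   *)
(*   - [hol s] is the holonomy (period of the Abelian differential, as a     *)
(*     vector (x,y) in R^2) of side s with its ccw orientation; glued sides  *)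
(*     have opposite holonomy (translation gluing), each triangle closes up  *)
(*     and is a nondegenerate, positively oriented Euclidean triangle.       *)

Definition cross2 {R : realType} (u v : R * R) : R := u.1 * v.2 - u.2 * v.1.
Definition dot2 {R : realType} (u v : R * R) : R := u.1 * v.1 + u.2 * v.2.
Definition norm2 {R : realType} (u : R * R) : R := Num.sqrt (dot2 u u).
Definition opp2 {R : realType} (u : R * R) : R * R := (- u.1, - u.2).

Record flat_triangulation (R : realType) := FlatTriangulation {
  nF : nat;
  tglue : 'I_nF * 'I_3 -> 'I_nF * 'I_3;
  hol : 'I_nF * 'I_3 -> R * R;
  tglueK : forall s, tglue (tglue s) = s;
  tglue_nofix : forall s, tglue s != s;
  hol_tglue : forall s, hol (tglue s) = opp2 (hol s);
  hol_closed1 : forall t : 'I_nF, \sum_(k < 3) (hol (t, k)).1 = 0;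
  hol_closed2 : forall t : 'I_nF, \sum_(k < 3) (hol (t, k)).2 = 0;
  hol_ccw : forall (t : 'I_nF) (k : 'I_3), 0 < cross2 (hol (t, k)) (hol (t, ordS k))
}.

Arguments nF {R} f : rename.
Arguments tglue {R} f _ : rename.
Arguments hol {R} f _ : rename.

Notation side S := ('I_(nF S) * 'I_3)%type.

Section Surface.
Variables (R : realType) (S : flat_triangulation R).

(* Corner (t,k) = vertex k of triangle t (start of side (t,k)).  Rotating   *)
(* around a vertex: the side (t,k) is glued to (t',j), and vertex k of t is *)
(* identified with vertex j+1 of t'.  Vertices of T = orbits of [rot].     *)
Definition rot (c : side S) : side S := ((tglue S c).1, ordS (tglue S c).2).

Definition num_vertices : nat := #|froots rot|.

Definition adj : rel 'I_(nF S) :=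
  fun t t' => [exists k : 'I_3, (tglue S (t, k)).1 == t'].
Definition connected_surface : Prop := forall t t' : 'I_(nF S), connect adj t t'.

(* Genus via Euler characteristic V - E + F = 2 - 2g, with E = 3F/2. *)
Definition has_genus (g : nat) : Prop := (2 * num_vertices + 4 * g = 4 + nF S)%N.

Definition corner_angle (c : side S) : R :=
  let u := hol S c in
  let v := opp2 (hol S (c.1, ord_pred c.2)) in
  acos (dot2 u v / (norm2 u * norm2 v)).

Definition cone_angle (c : side S) : R :=
  \sum_(c' : side S | fconnect rot c c') corner_angle c'.

Definition vertices_at_zeros : Prop := forall c : side S, 2 * pi < cone_angle c.

(* A closed curve is recorded (up to isotopy preserving transversality) by  *)
(* the nonempty cyclic sequence of its crossings: a crossing is the side c  *)
(* through which the curve leaves triangle c.1 (entering triangle           *)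
(* (tglue c).1); the next crossing must be a side of the triangle entered.  *)
Definition closed_curve (cs : seq (side S)) : bool :=
  (0 < size cs)%N &&
  cycle (fun c d : side S => d.1 == (tglue S c).1) cs.

(* Weighted oriented curves: weight w (negative = reversed orientation). *)
Definition integral_multicurve (D : seq (int * seq (side S))) : Prop :=
  forall wc, wc \in D -> wc.1 != 0 /\ closed_curve wc.2.

Definition on_edge (s c : side S) : bool := (c == s) || (c == tglue S s).

Definition inter_num (D : seq (int * seq (side S))) (s : side S) : nat :=
  (\sum_(wc <- D) `|wc.1|%N * count (on_edge s) wc.2)%N.

(* A crossing through side c by a curve of weight w goes from the left to *)
(* the right of the vector hol c (the triangle c.1 lies to its left) when  *)
(* w > 0, and from right to left when w < 0.  Hence, relative to the edge  *)
(* orientation with positive x-component, it is left-to-right iff          *)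
(* w * x(hol c) > 0.                                                        *)
Definition crosses_left_to_right (w : int) (c : side S) : bool :=
  0 < w%:~R * (hol S c).1.

(* Relative to the fixed orientation hol s of the edge of s, the crossing  *)
(* through c (on that edge) is left-to-right iff this boolean is true.    *)
Definition crossing_side (s : side S) (w : int) (c : side S) : bool :=
  (0 < w) == (c == s).

End Surface.

From Pilot Require Import Defs.
From HB Require Import structures.
From mathcomp Require Import all_boot all_order all_algebra.
From mathcomp Require Import all_classical all_reals all_analysis.
From mathcomp Require Import ring lra zify.
Import Order.TTheory GRing.Theory Num.Theory.
Local Open Scope ring_scope.
Set Implicit Arguments. Unset Strict Implicit. Unset Printing Implicit Defensive.

(* Gauss-Bonnet bounds the number F of triangles.  Walking around a triangle
   the direction of the sides turns by pi plus each interior angle, and walking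
   around a vertex it turns by each corner angle; since the total turn is a
   rotation by a multiple of 2 pi, the angles of a triangle sum to pi and the
   cone angle at a zero of the differential, being > 2 pi, is >= 4 pi.  Hence
   4 V <= F, and Euler's formula 2 V + 4 g = 4 + F gives F <= 8 g.
   For small eps > 0 the period f = x + eps y of the sides has the sign of x on
   non-vertical sides and never vanishes; it is antisymmetric under gluing and
   sums to 0 on each triangle, i.e. it is a flow on the dual graph.  Following
   sides of positive flow from a side of positive flow one must come back to
   the starting triangle, since otherwise all the flow through the boundary of
   the region reached would be inward.  This yields an embedded closed curve
   crossing every edge at most once, always towards positive x; one such curve
   through each edge of W gives the multicurve, with at most 3 F <= 24 g
   crossings on each edge. *)

Section PlaneGeometry.
Variable R : realType.
Implicit Types (u v w : R * R) (a b : R).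

Definition rotate a w : R * R :=
  (cos a * w.1 - sin a * w.2, sin a * w.1 + cos a * w.2).

Lemma rotateD a b w : rotate a (rotate b w) = rotate (a + b) w.
Proof. by rewrite /rotate /= cosD sinD; congr (_, _); ring. Qed.

Lemma rotateDpi a w : rotate (a + pi) w = opp2 (rotate a w).
Proof. by rewrite /rotate /opp2 /= cosDpi sinDpi; congr (_, _); ring. Qed.

Lemma cos_rotate_fixed a w :
  w.1 ^+ 2 + w.2 ^+ 2 = 1 -> rotate a w = w -> cos a = 1.
Proof.
move=> w_unit fix_w.
have -> : cos a = w.1 * (rotate a w).1 + w.2 * (rotate a w).2.
  by rewrite /rotate /=; transitivity (cos a * (w.1 ^+ 2 + w.2 ^+ 2));
    [rewrite w_unit mulr1 | ring].
by rewrite fix_w -w_unit; ring.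
Qed.

Lemma rotate_telescope (w : nat -> R * R) (phi : nat -> R) m :
  (forall i, (i < m)%N -> w i = rotate (phi i) (w i.+1)) ->
  w 0%N = rotate (\sum_(i < m) phi i) (w m).
Proof.
elim: m => [_|m IHm step].
  by rewrite big_ord0 /rotate cos0 sin0; case: (w 0%N) => x y /=; congr (_, _); ring.
by rewrite big_ord_recr /= -rotateD -step // IHm // => i /ltnW; apply: step.
Qed.

Definition normalize u : R * R := (u.1 / norm2 u, u.2 / norm2 u).

Lemma norm2_sqr u : norm2 u ^+ 2 = u.1 ^+ 2 + u.2 ^+ 2.
Proof. by rewrite sqr_sqrtr /dot2 -!expr2 // addr_ge0 ?sqr_ge0. Qed.

Lemma norm2_gt0 u : u != (0, 0) -> 0 < norm2 u.
Proof.
case: u => x y u_neq0; rewrite sqrtr_gt0 /dot2 /= lt_neqAle -!expr2.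
rewrite addr_ge0 ?sqr_ge0 // andbT eq_sym paddr_eq0 ?sqr_ge0 // !sqrf_eq0.
by apply: contra u_neq0 => /andP[/eqP-> /eqP->].
Qed.

Lemma norm2_opp u : norm2 (opp2 u) = norm2 u.
Proof. by rewrite /norm2 /dot2 /= !mulrNN. Qed.

Lemma normalize_opp u : normalize (opp2 u) = opp2 (normalize u).
Proof. by rewrite /normalize norm2_opp /= !mulNr. Qed.

Lemma normalize_unit u : u != (0, 0) ->
  (normalize u).1 ^+ 2 + (normalize u).2 ^+ 2 = 1.
Proof.
move=> /norm2_gt0 u_gt0.
by rewrite /= !expr_div_n -mulrDl -norm2_sqr divff // expf_neq0 // gt_eqF.
Qed.

Lemma cross2_gt0_neq0 u v : 0 < cross2 u v -> u != (0, 0) /\ v != (0, 0).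
Proof.
case: u v => [a b] [c d]; rewrite /cross2 /= => uv_gt0.
by split; apply: contraTneq uv_gt0 => -[-> ->]; rewrite ?mul0r ?mulr0 subrr ltxx.
Qed.

Lemma dot2_cross2_sqr u v :
  dot2 u v ^+ 2 + cross2 u v ^+ 2 = (norm2 u * norm2 v) ^+ 2.
Proof. by rewrite exprMn !norm2_sqr /dot2 /cross2; ring. Qed.

Definition angle u v : R := acos (dot2 u v / (norm2 u * norm2 v)).

Lemma cos_sin_angle u v : 0 < cross2 u v ->
  [/\ 0 <= angle u v, angle u v < pi,
      cos (angle u v) = dot2 u v / (norm2 u * norm2 v)
    & sin (angle u v) = cross2 u v / (norm2 u * norm2 v)].
Proof.
move=> uv_gt0; have [/norm2_gt0 nu_gt0 /norm2_gt0 nv_gt0] := cross2_gt0_neq0 uv_gt0.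
have nuv_gt0 : 0 < norm2 u * norm2 v by rewrite mulr_gt0.
set c := dot2 u v / _; set s := cross2 u v / _.
have s_gt0 : 0 < s by rewrite divr_gt0.
have c2s2 : 1 - c ^+ 2 = s ^+ 2.
  rewrite !expr_div_n -dot2_cross2_sqr; field.
  by rewrite dot2_cross2_sqr expf_neq0 // gt_eqF.
have c_in : -1 < c < 1.
  have : c ^+ 2 < 1 by rewrite -subr_gt0 c2s2 exprn_gt0.
  by rewrite expr2 => c2_lt1; apply/andP; split; nra.
have c_in_closed : -1 <= c <= 1 by case/andP: c_in => *; rewrite !ltW.
split.
- exact: acos_ge0.
- by apply: acos_ltpi; case/andP: c_in => -> /ltW.
- by rewrite /angle acosK // in_itv.
- by rewrite /angle sin_acos // c2s2 sqrtr_sqr gtr0_norm.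
Qed.

Lemma normalize_angle u v : 0 < cross2 u v ->
  normalize v = rotate (angle u v) (normalize u).
Proof.
move=> uv_gt0; have [/norm2_gt0 nu_gt0 /norm2_gt0 nv_gt0] := cross2_gt0_neq0 uv_gt0.
have nu2_neq0 : norm2 u ^+ 2 != 0 by rewrite expf_neq0 // gt_eqF.
have rot1 : dot2 u v * u.1 - cross2 u v * u.2 = norm2 u ^+ 2 * v.1.
  by rewrite norm2_sqr /dot2 /cross2; ring.
have rot2 : cross2 u v * u.1 + dot2 u v * u.2 = norm2 u ^+ 2 * v.2.
  by rewrite norm2_sqr /dot2 /cross2; ring.
rewrite /rotate /normalize /=; have [_ _ -> ->] := cos_sin_angle uv_gt0.
congr (_, _).
  by rewrite -[v.1](mulKf nu2_neq0) -rot1; field; rewrite !gt_eqF.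
by rewrite -[v.2](mulKf nu2_neq0) -rot2; field; rewrite !gt_eqF.
Qed.

Lemma cos_lt1 a : 0 < a < pi *+ 2 -> cos a < 1.
Proof.
move=> /andP[a_gt0 a_lt2pi]; rewrite lt_neqAle cos_le1 andbT.
have pi_gt0 := pi_gt0 R.
wlog a_lepi : a a_gt0 a_lt2pi / a <= pi.
  move=> ler; have [|pi_lta] := leP a pi; first exact: ler.
  rewrite -cosN -(cosD2pi (- a)) addrC; apply: ler; rewrite ?mulr2n; lra.
rewrite -cos0; apply/eqP => /cos_inj.
rewrite !in_itv /= lexx a_lepi (ltW pi_gt0) (ltW a_gt0) => /(_ isT isT) a_eq0.
by move: a_gt0; rewrite a_eq0 ltxx.
Qed.

Lemma cos_orbit_sum (T : finType) (f : T -> T) (v : T -> R * R) (phi : T -> R) c :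
  injective f -> v c != (0, 0) ->
  (forall x, normalize (v x) = rotate (phi (f x)) (normalize (v (f x)))) ->
  cos (\sum_(x | fconnect f c x) phi x) = 1.
Proof.
move=> f_inj vc_neq0 step; set m := order f c.
have -> : \sum_(x | fconnect f c x) phi x = \sum_(i < m) phi (iter i.+1 f c).
  rewrite (reindex_inj f_inj) (eq_bigl (mem (orbit f c))) => [|x]; last first.
    by rewrite -same_fconnect1_r // fconnect_orbit.
  rewrite -big_uniq ?orbit_uniq // (big_nth c) size_traject big_mkord.
  by apply: eq_bigr => i _; rewrite nth_traject.
apply: (cos_rotate_fixed (normalize_unit vc_neq0)).
have := @rotate_telescope (fun i => normalize (v (iter i f c)))
  (fun i => phi (iter i.+1 f c)) m (fun i _ => step _).
by rewrite /= iter_order // => <-.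
Qed.

End PlaneGeometry.

Lemma iter_ordS n (i : 'I_n) k : iter k (@ordS n) i = ((i + k) %% n)%N :> nat.
Proof.
elim: k => [|k IHk]; first by rewrite addn0 modn_small.
by rewrite iterS /= IHk -addn1 modnDml addn1 addnS.
Qed.

Lemma fconnect_ordS n (i j : 'I_n) : fconnect (@ordS n) i j.
Proof.
have -> : j = iter (j + n - i)%N (@ordS n) i.
  by apply: ord_inj; rewrite iter_ordS subnKC ?modnDr ?modn_small // ltnW // ltn_addl.
exact: (fconnect_iter (@ordS n)).
Qed.

Section AngleSums.
Variables (R : realType) (S : flat_triangulation R).

Lemma hol_neq0 (c : side S) : hol S c != (0, 0).
Proof. by case: c => t k; case: (cross2_gt0_neq0 (hol_ccw t k)). Qed.

Lemma cross2_corner (c : side S) :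
  0 < cross2 (hol S c) (opp2 (hol S (c.1, ord_pred c.2))).
Proof.
case: c => t k; have := hol_ccw t (ord_pred k); rewrite ord_predK /cross2 /=.
by congr (0 < _); ring.
Qed.

Lemma corner_angle_ge0 (c : side S) : 0 <= corner_angle c.
Proof. by case: (cos_sin_angle (cross2_corner c)). Qed.

Lemma corner_angle_ltpi (c : side S) : corner_angle c < pi.
Proof. by case: (cos_sin_angle (cross2_corner c)). Qed.

Lemma normalize_hol_ordS (t : 'I_(nF S)) (k : 'I_3) :
  normalize (hol S (t, k)) =
  rotate (corner_angle (t, ordS k) + pi) (normalize (hol S (t, ordS k))).
Proof.
rewrite rotateDpi -(normalize_angle (cross2_corner (t, ordS k))) /= ordSK.
by rewrite normalize_opp /opp2 /= !opprK.
Qed.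

Lemma normalize_hol_rot (c : side S) :
  normalize (hol S c) =
  rotate (corner_angle (Defs.rot c)) (normalize (hol S (Defs.rot c))).
Proof.
rewrite -(normalize_angle (cross2_corner (Defs.rot c))) /= ordSK.
by rewrite -surjective_pairing hol_tglue /opp2 /= !opprK.
Qed.

Lemma triangle_angle_sum (t : 'I_(nF S)) : \sum_(k < 3) corner_angle (t, k) <= pi.
Proof.
have pi_gt0 := pi_gt0 R; set A := \sum_(k < 3) _.
have pi3E : pi *+ 3 = \sum_(k < 3) (pi : R) by rewrite sumr_const card_ord.
have A_lt : A < pi *+ 3.
  rewrite pi3E; apply: ltr_sum => [|k _]; last exact: corner_angle_ltpi.
  by apply/hasP; exists ord0; rewrite ?mem_index_enum.
have A_ge0 : 0 <= A by apply: sumr_ge0 => k _; exact: corner_angle_ge0.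
have cos_sum : cos (A + pi *+ 3) = 1.
  rewrite pi3E -big_split /= -(eq_bigl _ _ (fconnect_ordS ord0)).
  exact: (cos_orbit_sum (phi := fun k => corner_angle (t, k) + pi)
            (@ordS_inj 3) (hol_neq0 (t, ord0)) (normalize_hol_ordS t)).
rewrite leNgt; apply/negP => pi_lt_A.
have : cos (A - pi) < 1 by apply: cos_lt1; rewrite mulr2n; lra.
have A3piE : A + pi *+ 3 = A - pi + pi *+ 2 + pi *+ 2 by rewrite !mulrS; ring.
by rewrite A3piE !cosD2pi in cos_sum; rewrite cos_sum ltxx.
Qed.

Lemma rot_inj : injective (@Defs.rot R S).
Proof.
move=> c d /(congr1 (fun c => (c.1, ord_pred c.2))); rewrite /Defs.rot /= !ordSK.
by rewrite -!surjective_pairing => /(congr1 (tglue S)); rewrite !tglueK.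
Qed.

Lemma cos_cone_angle (c : side S) : cos (cone_angle c) = 1.
Proof. exact: (cos_orbit_sum rot_inj (hol_neq0 c) normalize_hol_rot). Qed.

Lemma cone_angle_ge4pi (c : side S) : 2 * pi < cone_angle c -> pi *+ 4 <= cone_angle c.
Proof.
move=> cone_gt2pi; have pi_gt0 := pi_gt0 R.
rewrite leNgt; apply/negP => cone_lt4pi.
have : cos (cone_angle c - pi *+ 2) < 1.
  by apply: cos_lt1; rewrite mulr2n; move: cone_gt2pi cone_lt4pi; rewrite !mulrS; lra.
by rewrite -cosD2pi subrK cos_cone_angle ltxx.
Qed.

Lemma sum_corner_angle_le : \sum_(c : side S) corner_angle c <= pi *+ nF S.
Proof.
have -> : \sum_(c : side S) corner_angle c =
          \sum_(t < nF S) \sum_(k < 3) corner_angle (t, k).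
  by rewrite pair_big; apply: eq_bigr => -[].
rewrite -[in X in _ <= X](card_ord (nF S)) -sumr_const.
by apply: ler_sum => t _; exact: triangle_angle_sum.
Qed.

Lemma sum_corner_angle_ge : vertices_at_zeros S ->
  pi *+ 4 *+ num_vertices S <= \sum_(c : side S) corner_angle c.
Proof.
move=> zeros; have rot_sym := fconnect_sym rot_inj.
rewrite (partition_big (froot (@Defs.rot R S)) (froots (@Defs.rot R S))) /=; last first.
  by move=> c _; exact: (roots_root rot_sym).
rewrite /num_vertices -sumr_const; apply: ler_sum => r /eqP r_root.
rewrite (eq_bigl (fconnect (@Defs.rot R S) r)) => [|c].
  exact/cone_angle_ge4pi/zeros.
by rewrite -{1}r_root (root_connect rot_sym) rot_sym.
Qed.

Lemma nF_le_genus (g : nat) :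
  has_genus S g -> vertices_at_zeros S -> (nF S <= 8 * g)%N.
Proof.
move=> genus zeros; have pi_gt0 := pi_gt0 R.
have : (pi : R) *+ 4 *+ num_vertices S <= pi *+ nF S.
  apply: le_trans (sum_corner_angle_ge zeros) _.
  exact: sum_corner_angle_le.
rewrite -mulrnA -!(mulr_natr pi) ler_pM2l // ler_nat.
by move: genus; rewrite /has_genus; lia.
Qed.

End AngleSums.

Lemma exists_small_slope (R : realType) (T : finType) (x y : T -> R) :
  exists2 eps : R, 0 < eps & forall i, x i != 0 -> eps * `|y i| < `|x i|.
Proof.
set K := \sum_(i | x i != 0) `|y i| / `|x i|.
have K_ge0 : 0 <= K by apply: sumr_ge0 => i _; rewrite divr_ge0.
exists (1 + K)^-1 => [|i xi_neq0]; first by rewrite invr_gt0; lra.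
have xi_gt0 : 0 < `|x i| by rewrite normr_gt0.
have : `|y i| / `|x i| <= K.
  by rewrite [K](bigD1 i) //= lerDl sumr_ge0 // => j _; rewrite divr_ge0.
rewrite ler_pdivrMr // => yi_le.
rewrite mulrC ltr_pdivrMr; last lra.
by rewrite mulrDr mulr1 [_ * K]mulrC; lra.
Qed.

Section Flow.
Variables (R : realType) (S : flat_triangulation R) (f : side S -> R).
Hypothesis f_tglue : forall c, f (tglue S c) = - f c.
Hypothesis f_triangle : forall t, \sum_(k < 3) f (t, k) = 0.
Implicit Types (W : {set side S}) (s : side S).

Lemma flow_outflow0 (A : {set 'I_(nF S)}) :
  \sum_(s : side S | (s.1 \in A) && ((tglue S s).1 \notin A)) f s = 0.
Proof.
have total : \sum_(s : side S | s.1 \in A) f s = 0.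
  transitivity (\sum_(t in A) \sum_(k < 3) f (t, k)); last exact: big1.
  by rewrite pair_big_dep; apply: eq_big => [[t k]|[t k] _] //=; rewrite andbT.
set inner := \sum_(s | (s.1 \in A) && ((tglue S s).1 \in A)) f s.
have inner_opp : inner = - inner.
  rewrite {2}/inner (reindex_inj (can_inj (@tglueK R S))) /= -sumrN.
  by apply: eq_big => [s|s _]; rewrite ?tglueK 1?andbC // f_tglue opprK.
by move: total; rewrite (bigID (fun s => (tglue S s).1 \in A)) /= -/inner; lra.
Qed.

Definition flow_step : rel (side S) :=
  fun c d => (d.1 == (tglue S c).1) && (0 < f d).

Lemma flow_cycle_exists a :
  0 < f a -> exists p, cycle flow_step (a :: p) && uniq (a :: p).
Proof.
move=> fa_gt0.
pose A := [set t | [exists d, connect flow_step a d && ((tglue S d).1 == t)]].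
have A_closed s : s.1 \in A -> 0 < f s -> (tglue S s).1 \in A.
  rewrite !inE => /existsP[d /andP[a_d /eqP d_s]] fs_gt0; apply/existsP; exists s.
  rewrite eqxx andbT (connect_trans a_d) // connect1 //.
  by rewrite /flow_step d_s eqxx fs_gt0.
have [|aNA] := boolP (a.1 \in A).
  rewrite inE => /existsP[d /andP[/connectP[p a_p d_last] /eqP d_a]].
  case: (shortenP a_p) d_last => q a_q q_uniq _ d_last; exists q.
  by rewrite q_uniq andbT /= rcons_path a_q -d_last /flow_step d_a eqxx fa_gt0.
(* Otherwise no flow leaves A, and some enters it through tglue a. *)
have tga_out : (tglue S a).1 \in A.
  by rewrite inE; apply/existsP; exists a; rewrite connect0 eqxx.
have := flow_outflow0 A.
rewrite (bigD1 (tglue S a)) /=; last by rewrite tglueK aNA tga_out.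
have : \sum_(s | (s.1 \in A) && ((tglue S s).1 \notin A) && (s != tglue S a)) f s <= 0.
  apply: sumr_le0 => s /andP[/andP[sA s_out] _]; rewrite leNgt.
  by apply: contra s_out => /(A_closed _ sA).
by rewrite f_tglue; lra.
Qed.

(* For [f a <= 0] this is the junk value [[:: a]]. *)
Definition flow_cycle a : seq (side S) :=
  a :: xget [::] (fun p => cycle flow_step (a :: p) && uniq (a :: p)).

Lemma flow_cycleP a :
  0 < f a -> cycle flow_step (flow_cycle a) && uniq (flow_cycle a).
Proof.
case/flow_cycle_exists => p.
exact: (@xgetI _ [::] (fun q => is_true (cycle flow_step (a :: q) && uniq (a :: q))) p).
Qed.

Lemma flow_cycle_closed a : 0 < f a -> closed_curve (flow_cycle a).
Proof.
move=> /flow_cycleP /andP[a_cycle _]; apply/andP; split => //.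
by apply: sub_cycle a_cycle => c d /andP[].
Qed.

Lemma flow_cycle_gt0 a c : 0 < f a -> c \in flow_cycle a -> 0 < f c.
Proof.
by move=> /flow_cycleP /andP[a_cycle _] /(prev_cycle a_cycle) /andP[].
Qed.

Lemma count_on_edge_le1 (s : side S) (l : seq (side S)) :
  uniq l -> all (fun c => 0 < f c) l -> (count (on_edge s) l <= 1)%N.
Proof.
move=> l_uniq /allP l_gt0; rewrite -size_filter.
pose r := if 0 < f s then s else tglue S s.
apply: (@uniq_leq_size _ _ [:: r]); first exact: filter_uniq.
move=> c; rewrite mem_filter inE /r => /andP[/orP[] /eqP-> /l_gt0 fc_gt0].
  by rewrite fc_gt0.
by move: fc_gt0; rewrite f_tglue oppr_gt0 => /lt_gtF ->.
Qed.

Definition flow_multicurve (W : {set side S}) : seq (int * seq (side S)) :=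
  [seq (1%:Z, flow_cycle a) | a <- enum [set a in W | 0 < f a]].

Lemma flow_multicurveP W wc :
  wc \in flow_multicurve W -> exists2 a, 0 < f a & wc = (1%:Z, flow_cycle a).
Proof. by case/mapP => a; rewrite mem_enum inE => /andP[_ fa_gt0] ->; exists a. Qed.

Lemma flow_multicurve_integral W : integral_multicurve (flow_multicurve W).
Proof.
by move=> wc /flow_multicurveP[a fa_gt0 ->]; split; last exact: flow_cycle_closed.
Qed.

Lemma flow_multicurve_crossing W wc c :
  wc \in flow_multicurve W -> c \in wc.2 -> wc.1 = 1 /\ 0 < f c.
Proof.
by case/flow_multicurveP => a fa_gt0 -> c_a; split; last exact: flow_cycle_gt0 c_a.
Qed.

Lemma flow_multicurve_covers W s :
  (forall c, f c != 0) -> (forall c, (tglue S c \in W) = (c \in W)) ->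
  s \in W -> exists2 wc, wc \in flow_multicurve W & has (on_edge s) wc.2.
Proof.
move=> f_neq0 W_tglue sW.
have [a [aW fa_gt0 s_a]] : exists a, [/\ a \in W, 0 < f a & on_edge s a].
  have [fs_gt0|fs_le0] := ltP 0 (f s); first by exists s; rewrite /on_edge eqxx.
  exists (tglue S s); rewrite W_tglue /on_edge eqxx orbT f_tglue oppr_gt0.
  by rewrite lt_neqAle f_neq0 fs_le0.
exists (1%:Z, flow_cycle a); last by rewrite /= s_a.
by apply/mapP; exists a; rewrite // mem_enum inE aW fa_gt0.
Qed.

Lemma inter_num_flow_multicurve W s :
  (inter_num (flow_multicurve W) s <= 3 * nF S)%N.
Proof.
rewrite /inter_num big_map big_enum /=.
apply: (@leq_trans (\sum_(a in [set a in W | (0 < f a)%R]) 1)%N).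
  apply: leq_sum => a; rewrite inE => /andP[_ fa_gt0]; rewrite mul1n.
  have /andP[_ a_uniq] := flow_cycleP fa_gt0.
  by apply: count_on_edge_le1 a_uniq _; apply/allP => c; exact: flow_cycle_gt0.
by rewrite sum1_card (leq_trans (max_card _)) // card_prod !card_ord mulnC.
Qed.

Lemma crossing_side_flow s c :
  0 < f c -> on_edge s c -> crossing_side s 1 c = (0 < f s).
Proof.
move=> + /orP[] /eqP c_s; rewrite /crossing_side ltr01 c_s.
  by move=> ->; rewrite eqxx.
by rewrite (negbTE (tglue_nofix _)) f_tglue oppr_gt0 => /lt_gtF ->.
Qed.

End Flow.

Section TiltedFlow.
Variables (R : realType) (S : flat_triangulation R) (eps : R).
Hypothesis eps_gt0 : 0 < eps.
Hypothesis eps_slope :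
  forall c : side S, (hol S c).1 != 0 -> eps * `|(hol S c).2| < `|(hol S c).1|.

Definition tilted_flow (c : side S) : R := (hol S c).1 + eps * (hol S c).2.

Lemma tilted_flow_tglue c : tilted_flow (tglue S c) = - tilted_flow c.
Proof. by rewrite /tilted_flow hol_tglue /=; ring. Qed.

Lemma tilted_flow_triangle t : \sum_(k < 3) tilted_flow (t, k) = 0.
Proof. by rewrite big_split /= -mulr_sumr hol_closed1 hol_closed2 mulr0 addr0. Qed.

Lemma tilted_flow_gt0E c :
  (hol S c).1 != 0 -> (0 < tilted_flow c) = (0 < (hol S c).1).
Proof.
move=> x_neq0; set z := eps * (hol S c).2.
have z_lt : `|z| < `|(hol S c).1| by rewrite normrM gtr0_norm // eps_slope.
have z_le := ler_norm z; have := ler_norm (- z); rewrite normrN => Nz_le.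
rewrite /tilted_flow -/z; move: x_neq0 z_lt; rewrite neq_lt => /orP[x_lt0|x_gt0].
  rewrite (ltr0_norm x_lt0) (lt_gtF x_lt0) => z_lt.
  by apply/negbTE; rewrite -leNgt; lra.
by rewrite (gtr0_norm x_gt0) x_gt0 => z_lt; lra.
Qed.

Lemma tilted_flow_neq0 c : tilted_flow c != 0.
Proof.
rewrite /tilted_flow; have [x_eq0|x_neq0] := eqVneq (hol S c).1 0.
  rewrite x_eq0 add0r mulf_neq0 ?(gt_eqF eps_gt0) //.
  apply: contra (hol_neq0 c) => /eqP y_eq0.
  by rewrite [hol S c]surjective_pairing x_eq0 y_eq0.
apply/negP; rewrite addr_eq0 => /eqP x_eq; move: (eps_slope x_neq0).
by rewrite x_eq normrN normrM (gtr0_norm eps_gt0) ltxx.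
Qed.

Lemma crosses_left_to_right_tilted c :
  (hol S c).1 != 0 -> 0 < tilted_flow c -> crosses_left_to_right 1 c.
Proof. by move=> x_neq0; rewrite tilted_flow_gt0E // /crosses_left_to_right mul1r. Qed.

End TiltedFlow.

Lemma on_edge_hol1_eq0 (R : realType) (S : flat_triangulation R) (s c : side S) :
  on_edge s c -> ((hol S c).1 == 0) = ((hol S s).1 == 0).
Proof. by case/orP => /eqP->; rewrite ?hol_tglue /= ?oppr_eq0. Qed.

Theorem lemma8p9 (g : nat) :
  exists n : nat,
  forall (R : realType) (S : flat_triangulation R),
    connected_surface S -> has_genus S g -> vertices_at_zeros S ->
  forall W : {set side S}, (forall s, (tglue S s \in W) = (s \in W)) ->
  exists D : seq (int * seq (side S)),
    [/\ integral_multicurve D,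
        (* (b) *)
        (forall s, s \in W -> exists2 wc, wc \in D & has (on_edge s) wc.2),
        (* (c) non-vertical edges of W: every crossing is left to right *)
        (forall s, s \in W -> (hol S s).1 != 0 ->
           forall wc, wc \in D -> forall c, c \in wc.2 -> on_edge s c ->
             crosses_left_to_right wc.1 c),
        (* (c) vertical edges of W: all crossings from the same side *)
        (forall s, s \in W -> (hol S s).1 = 0 ->
           exists b : bool, forall wc, wc \in D -> forall c, c \in wc.2 ->
             on_edge s c -> crossing_side s wc.1 c = b)
      & (* (d) *)
        (forall s : side S, (inter_num D s <= n)%N)].
Proof.
exists (24 * g)%N => R S _ genus zeros W W_tglue.
have nF_le := nF_le_genus genus zeros.
have [eps eps_gt0 eps_slope] :=
  exists_small_slope (fun c : side S => (hol S c).1) (fun c => (hol S c).2).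
pose f := @tilted_flow R S eps.
have f_tglue : forall c, f (tglue S c) = - f c := @tilted_flow_tglue R S eps.
have f_triangle : forall t, \sum_(k < 3) f (t, k) = 0 := @tilted_flow_triangle R S eps.
have f_neq0 : forall c, f c != 0 := tilted_flow_neq0 eps_gt0 eps_slope.
have crossing := flow_multicurve_crossing f_tglue f_triangle (W := W).
exists (flow_multicurve f W); split.
- exact: flow_multicurve_integral.
- by move=> s /(flow_multicurve_covers f_tglue f_neq0 W_tglue).
- move=> s _ s_nvert wc /crossing crossing_wc c /crossing_wc[-> fc_gt0] c_s.
  apply: (crosses_left_to_right_tilted eps_gt0 eps_slope _ fc_gt0).
  by rewrite (on_edge_hol1_eq0 c_s).
- move=> s _ _; exists (0 < f s) => wc /crossing crossing_wc c /crossing_wc[-> fc_gt0].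
  exact: crossing_side_flow.
- move=> s; apply: leq_trans (inter_num_flow_multicurve f_tglue f_triangle W s) _.
  by lia.
Qed.
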